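(* Let $k$ be a field. If $F$ is a strictly additive and $G$ an additive (abelian group)-valued $k$-functor, and $\pi\colon F\to G$ is an epimorphism in the category of (abelian group)-valued $k$-functors, then $G$ is strictly additive.
   Context: A $k$-functor is a functor from commutative $k$-algebras to abelian groups. Epimorphisms are objectwise surjective. $\mathbb{G}_a^\alpha$ ($\alpha\in\{0,1,\dots,\infty\}$) is $B\mapsto\bigoplus_{i=1}^\alpha B$. A functor is strictly additive if it is isomorphic to some $\mathbb{G}_a^\alpha$. It is additive if it admits a filtration $0=F_0\subset F_1\subset\cdots\subset F_n=F$ by subfunctors whose successive quotients are strictly additive. *)

From HB Require Import structures.
From mathcomp Require Import all_boot all_order all_algebra.
Set Implicit Arguments. Unset Strict Implicit. Unset Printing Implicit Defensive.
Import GRing.Theory.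
Local Open Scope ring_scope.

Record kAlg (k : fieldType) := KAlg {
  kAlg_ring :> comPzRingType;
  kAlg_str : {rmorphism k -> kAlg_ring} }.

Record kHom (k : fieldType) (A B : kAlg k) := KHom {
  kHom_fun :> {rmorphism A -> B};
  kHom_str : forall c : k, kHom_fun (kAlg_str A c) = kAlg_str B c }.

Record kFunctor (k : fieldType) := KFunctor {
  kF_obj :> kAlg k -> zmodType;
  kF_map : forall A B : kAlg k, kHom A B -> kF_obj A -> kF_obj B;
  kF_map_add : forall (A B : kAlg k) (f : kHom A B) (x y : kF_obj A),
      kF_map f (x + y) = kF_map f x + kF_map f y;
  kF_map_id : forall (A : kAlg k) (f : kHom A A),
      (forall a, f a = a) -> forall x, kF_map f x = x;
  kF_map_comp : forall (A B C : kAlg k) (f : kHom A B) (g : kHom B C)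
      (h : kHom A C), (forall a, h a = g (f a)) ->
      forall x, kF_map h x = kF_map g (kF_map f x) }.

Record kNat (k : fieldType) (F G : kFunctor k) := KNat {
  kN_fun :> forall A : kAlg k, F A -> G A;
  kN_add : forall A (x y : F A), @kN_fun A (x + y) = @kN_fun A x + @kN_fun A y;
  kN_natural : forall (A B : kAlg k) (f : kHom A B) (x : F A),
      @kN_fun B (kF_map f x) = kF_map f (@kN_fun A x) }.

(* Epimorphisms are objectwise surjective. *)
Definition kEpi (k : fieldType) (F G : kFunctor k) (pi : kNat F G) : Prop :=
  forall (A : kAlg k) (y : G A), exists x : F A, pi A x = y.

(* alpha : option nat, with None standing for infinity.
   Ga_elt alpha B s : s is an element of  G_a^alpha(B) = (+)_{i < alpha} B,
   represented as a finitely supported sequence nat -> B vanishing at i >= alpha. *)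
Definition Ga_elt (alpha : option nat) (B : comPzRingType) (s : nat -> B) : Prop :=
  (exists n, forall i, (n <= i)%N -> s i = 0) /\
  (forall i, if alpha is Some n then (n <= i)%N -> s i = 0 else True).

Definition is_subfunctor (k : fieldType) (G : kFunctor k)
    (S : forall A : kAlg k, G A -> Prop) : Prop :=
  (forall A, S A 0) /\
  (forall A x y, S A x -> S A y -> S A (x - y)) /\
  (forall A B (f : kHom A B) x, S A x -> S B (kF_map f x)).

(* For subfunctors S <= T of G, the quotient functor T/S is isomorphic to
   G_a^alpha; by the first isomorphism theorem (objectwise) this amounts to a
   natural additive map phi : T -> G_a^alpha which is objectwise surjective
   with kernel exactly S. *)
Definition subquot_iso_Ga (k : fieldType) (G : kFunctor k)
    (S T : forall A : kAlg k, G A -> Prop) (alpha : option nat) : Prop :=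
  exists phi : forall A : kAlg k, G A -> nat -> A,
    (forall (A : kAlg k) x y i, T A x -> T A y -> phi A (x + y) i = phi A x i + phi A y i) /\
    (forall (A : kAlg k) x, T A x -> Ga_elt alpha (phi A x)) /\
    (forall (A : kAlg k) (s : nat -> A), Ga_elt alpha s -> exists x, T A x /\ phi A x = s) /\
    (forall (A : kAlg k) x, T A x -> ((forall i, phi A x i = 0) <-> S A x)) /\
    (forall (A B : kAlg k) (f : kHom A B) x i, T A x ->
        phi B (kF_map f x) i = f (phi A x i)).

Definition strictly_additive (k : fieldType) (F : kFunctor k) : Prop :=
  exists alpha : option nat,
    subquot_iso_Ga (fun A (x : F A) => x = 0) (fun _ _ => True) alpha.

Definition additive (k : fieldType) (F : kFunctor k) : Prop :=
  exists (n : nat) (Fi : nat -> forall A : kAlg k, F A -> Prop),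
    (forall i, is_subfunctor (Fi i)) /\
    (forall A (x : F A), Fi 0%N A x <-> x = 0) /\
    (forall A (x : F A), Fi n A x) /\
    (forall i A (x : F A), (i < n)%N -> Fi i A x -> Fi i.+1 A x) /\
    (forall i, (i < n)%N -> exists alpha, subquot_iso_Ga (Fi i) (Fi i.+1) alpha).

From Pilot Require Import Defs.
From HB Require Import structures.
From mathcomp Require Import all_boot all_order all_algebra ring.
From Stdlib Require Import FunctionalExtensionality ClassicalEpsilon Classical.

(* Write F as G_a^al.  Composing with pi yields a natural additive map Pi : G_a^al -> G that
   hits every element, and we induct on the length of the filtration: if F_n/F_1 is G_a^be,
   then Psi : G_a^al -> G_a^be, Pi followed by the coordinates of F_n/F_1, is an epimorphism.
   Naturality along X |-> X + Y forces the coordinates of Psi(d X) to be additive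
   polynomials, i.e. supported on the exponents m with (1 + X)^m = 1 + X^m.  Hence Psi commutes
   with taking the additive part of a polynomial, so the additive parts of preimages of the
   generic points X e_l of G_a^be(k[X]) assemble into a natural additive section of Psi.
   Through Pi it splits 0 -> F_1/F_0 -> F_n/F_0 -> G_a^be -> 0, and F_n/F_0 is the strictly
   additive functor G_a^ga (+) G_a^be. *)

Set Implicit Arguments. Unset Strict Implicit. Unset Printing Implicit Defensive.

(* [GRing.Theory] exports a lemma [additive] that would shadow [Defs.additive] in the
   statement of [mainTheorem8]. *)
Module StrictlyAdditive.
Import GRing.Theory.
Local Open Scope ring_scope.

Section AdditiveExponent.
Variable k : fieldType.

(* In characteristic p > 0 these are the powers of p; in characteristic 0 only 1. *)
Definition additive_exponent (n : nat) : bool :=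
  (0 < n)%N && ((1 + 'X : {poly k}) ^+ n == 1 + 'X ^+ n).

Lemma coef_1DX_exp n j : ((1 + 'X : {poly k}) ^+ n)`_j = 'C(n, j)%:R.
Proof.
rewrite addrC exprD1n coef_sum.
under eq_bigr => i _ do rewrite coefMn coefXn (eq_sym j) mulrnAC mulrb.
rewrite -big_mkcond (big_ord1_eq _ (fun i => 'C(n, i)%:R)) ltnS.
by case: leqP => // /bin_small ->.
Qed.

Lemma additive_exponentP n :
  reflect ((0 < n)%N /\ forall j, (0 < j < n)%N -> 'C(n, j)%:R = 0 :> k)
          (additive_exponent n).
Proof.
apply: (iffP andP) => -[n_gt0]; [move/eqP=> En | move=> binom0]; split=> //.
  move=> j /andP[j_gt0 jn]; have := congr1 (coefp j) En.
  by rewrite /= coef_1DX_exp coefD coef1 coefXn (gtn_eqF j_gt0) (ltn_eqF jn) addr0.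
apply/eqP/polyP => j; rewrite coef_1DX_exp coefD coef1 coefXn.
have [->|j_gt0] := posnP j; first by rewrite bin0 eq_sym (gtn_eqF n_gt0) addr0.
rewrite add0r; case: ltngtP => [jn|nj|->]; last by rewrite binn.
  by rewrite binom0 ?j_gt0.
by rewrite bin_small.
Qed.

Lemma additive_exponent1 : additive_exponent 1.
Proof. by rewrite /additive_exponent !expr1 eqxx. Qed.

Lemma additive_exponent_gt0 n : additive_exponent n -> (0 < n)%N.
Proof. by case/andP. Qed.

Lemma comp_1DX_exp_Xn m n : ((1 + 'X : {poly k}) ^+ n) \Po 'X^m = (1 + 'X^m) ^+ n.
Proof. by rewrite rmorphXn /= comp_polyD comp_polyC comp_polyX. Qed.

Lemma additive_exponentM m n :
  additive_exponent m -> additive_exponent n -> additive_exponent (m * n).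
Proof.
move=> /andP[m_gt0 /eqP Em] /andP[n_gt0 /eqP En]; rewrite /additive_exponent muln_gt0.
rewrite m_gt0 n_gt0 exprM Em -comp_1DX_exp_Xn En.
by rewrite comp_polyD comp_polyC polyC1 comp_Xn_poly -exprM eqxx.
Qed.

Lemma additive_exponent_divl m n :
  additive_exponent (m * n) -> additive_exponent n -> additive_exponent m.
Proof.
move=> /andP[mn_gt0 /eqP Emn] /andP[n_gt0 /eqP En].
have m_gt0 : (0 < m)%N by move: mn_gt0; rewrite muln_gt0 => /andP[].
apply/andP; split=> //; apply/eqP/polyP => j.
have : ((1 + 'X) ^+ m) \Po 'X^n = (1 + 'X^m) \Po ('X^n : {poly k}).
  rewrite comp_1DX_exp_Xn -En -exprM mulnC Emn.
  by rewrite comp_polyD comp_polyC polyC1 comp_Xn_poly -exprM mulnC.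
by move=> /(congr1 (coefp (j * n))) /=; rewrite !coef_comp_poly_Xn // dvdn_mull // mulnK.
Qed.

Lemma exprD_additive_exponent (B : kAlg k) n (u w : B) :
  additive_exponent n -> (u + w) ^+ n = u ^+ n + w ^+ n.
Proof.
case: n => [|n] /additive_exponentP[// _ binom0]; rewrite exprDn.
rewrite big_ord_recr big_ord_recl /= subnn subn0 !bin0 binn !expr0 mulr1 mul1r.
rewrite big1 ?add0r ?addr0 ?mulr1n // => i _.
rewrite -mulr_natr -(rmorph_nat (kAlg_str B)) binom0 ?rmorph0 ?mulr0 //.
by rewrite /bump /= add1n ltnS ltn_ord.
Qed.

End AdditiveExponent.

Section Evaluation.
Variable k : fieldType.

Definition poly_kAlg : kAlg k := @KAlg k {poly k} polyC.

Definition poly2_kAlg : kAlg k :=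
  @KAlg k {poly {poly k}} ((polyC : {rmorphism {poly k} -> _}) \o polyC : {rmorphism k -> _}).

(* Written out because [{poly B}] needs [B] to be a nontrivial ring. *)
Definition ev (B : kAlg k) (u : B) (p : {poly k}) : B :=
  \sum_(i < size p) kAlg_str B p`_i * u ^+ i.

Variables (B : kAlg k) (u : B).
Implicit Types p q : {poly k}.

Lemma ev_wide n p : (size p <= n)%N -> ev u p = \sum_(i < n) kAlg_str B p`_i * u ^+ i.
Proof.
move=> le_p_n; rewrite /ev (big_ord_widen n (fun i => kAlg_str B p`_i * u ^+ i) le_p_n).
rewrite big_mkcond /=; apply: eq_bigr => i _.
by case: ltnP => // /(nth_default 0) ->; rewrite rmorph0 mul0r.
Qed.

Lemma ev0 : ev u 0 = 0.
Proof. by rewrite /ev size_poly0 big_ord0. Qed.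

Lemma evD p q : ev u (p + q) = ev u p + ev u q.
Proof.
pose n := maxn (size p) (size q).
rewrite (@ev_wide n) ?(@ev_wide n p) ?(@ev_wide n q) ?leq_maxl ?leq_maxr //.
  by rewrite -big_split; apply: eq_bigr => i _; rewrite coefD rmorphD mulrDl.
exact: leq_trans (size_polyD _ _) _.
Qed.

Lemma evC c : ev u c%:P = kAlg_str B c.
Proof. by rewrite (@ev_wide 1) ?size_polyC ?leq_b1 // big_ord1 coefC mulr1. Qed.

Lemma evZ c p : ev u (c *: p) = kAlg_str B c * ev u p.
Proof.
rewrite (@ev_wide (size p)) ?size_scale_leq // /ev mulr_sumr.
by apply: eq_bigr => i _; rewrite coefZ rmorphM mulrA.
Qed.

Lemma evMX p : ev u (p * 'X) = ev u p * u.
Proof.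
rewrite (@ev_wide (size p).+1); last first.
  by have [->|p_neq0] := eqVneq p 0; rewrite ?mul0r ?size_poly0 ?size_mulX.
rewrite big_ord_recl coefMX /= rmorph0 mul0r add0r /ev mulr_suml.
by apply: eq_bigr => i _; rewrite coefMX exprSr mulrA.
Qed.

Lemma evM p q : ev u (p * q) = ev u p * ev u q.
Proof.
elim/poly_ind: p => [|p c IHp]; first by rewrite mul0r ev0 mul0r.
by rewrite mulrDl !evD mulrAC !evMX IHp mul_polyC evZ evC; ring.
Qed.

Lemma ev1 : ev u 1 = 1.
Proof. by rewrite -polyC1 evC rmorph1. Qed.

Lemma evX : ev u 'X = u.
Proof. by rewrite -(mul1r 'X) evMX ev1 mul1r. Qed.

End Evaluation.

HB.instance Definition _ (k : fieldType) (B : kAlg k) (u : B) :=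
  GRing.isNmodMorphism.Build {poly k} B (ev u) (ev0 u, evD u).
HB.instance Definition _ (k : fieldType) (B : kAlg k) (u : B) :=
  GRing.isMonoidMorphism.Build {poly k} B (ev u) (ev1 u, evM u).

Definition ev_kHom (k : fieldType) (B : kAlg k) (u : B) : kHom (poly_kAlg k) B :=
  @KHom k (poly_kAlg k) B (ev u : {rmorphism poly_kAlg k -> B}) (evC u).

Lemma ev_natural (k : fieldType) (A B : kAlg k) (f : kHom A B) (u : A) p :
  f (ev u p) = ev (f u) p.
Proof.
by rewrite rmorph_sum; apply: eq_bigr => i _; rewrite rmorphM rmorphXn kHom_str.
Qed.

Lemma ev_poly (k : fieldType) (u p : {poly k}) : ev (B := poly_kAlg k) u p = p \Po u.
Proof. by rewrite comp_polyE; apply: eq_bigr => i _; rewrite mul_polyC. Qed.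

Section AdditivePolynomial.
Variable k : fieldType.
Implicit Types p : {poly k}.
(* ['Y] is the inner variable: [(q`_j)`_i] is the coefficient of ['X^j 'Y^i]. *)
Local Notation ev2 := (ev (B := poly2_kAlg k)).

Definition additive_poly p : Prop := forall n, p`_n != 0 -> additive_exponent k n.

Definition additive_part p : {poly k} :=
  \poly_(n < size p) (if additive_exponent k n then p`_n else 0).

Lemma coef_additive_part p n :
  (additive_part p)`_n = if additive_exponent k n then p`_n else 0.
Proof.
rewrite coef_poly; case: ltnP => // /(nth_default 0) ->.
by case: additive_exponent.
Qed.

Lemma additive_part_additive p : additive_poly (additive_part p).
Proof. by move=> n; rewrite coef_additive_part; case: additive_exponent; rewrite ?eqxx. Qed.

Lemma additive_part0 : additive_part 0 = 0.
Proof. by apply/polyP => n; rewrite coef_additive_part coef0; case: additive_exponent. Qed.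

Lemma additive_partX : additive_part 'X = 'X.
Proof.
apply/polyP => n; rewrite coef_additive_part coefX.
by case: eqP => [->|]; rewrite ?additive_exponent1 ?if_same.
Qed.

Lemma ev_additive_polyD (B : kAlg k) (u w : B) p :
  additive_poly p -> ev (u + w) p = ev u p + ev w p.
Proof.
move=> p_add; rewrite /ev -big_split /=; apply: eq_bigr => n _.
have [->|pn_neq0] := eqVneq p`_n 0; first by rewrite rmorph0 !mul0r addr0.
by rewrite (exprD_additive_exponent _ _ (p_add _ pn_neq0)) mulrDr.
Qed.

Lemma ev_additive_poly0 (B : kAlg k) p : additive_poly p -> ev (0 : B) p = 0.
Proof.
move=> p_add; rewrite /ev big1 // => n _.
have [->|pn_neq0] := eqVneq p`_n 0; first by rewrite rmorph0 mul0r.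
by rewrite expr0n (gtn_eqF (additive_exponent_gt0 (p_add _ pn_neq0))) mulr0.
Qed.

Lemma coef_ev2 (u : {poly {poly k}}) p i j :
  ((ev2 u p)`_j)`_i = \sum_(m < size p) p`_m * ((u ^+ m)`_j)`_i.
Proof. by rewrite coef_sum coef_sum; apply: eq_bigr => m _; rewrite !coefCM. Qed.

Lemma coef_XaY_exp m i j :
  ((('Y + 'X : {poly {poly k}}) ^+ m)`_j)`_i = 'C(m, j)%:R * (m == i + j)%:R.
Proof.
rewrite exprDn coef_sum.
under eq_bigr => r _ do
  rewrite -rmorphXn coefMn coefCM coefXn (eq_sym j) mulr_natr mulrnAC mulrb.
rewrite -big_mkcond (big_ord1_eq _ (fun r => 'X^(m - r) *+ 'C(m, r))) ltnS.
case: leqP => [le_jm|/bin_small->]; last by rewrite mul0r coef0.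
rewrite coefMn coefXn mulr_natl.
suff -> : (i == m - j)%N = (m == i + j)%N by [].
by apply/eqP/eqP => [->|->]; rewrite ?subnK ?addnK.
Qed.

Lemma coef_Y_exp m i j : ((('Y : {poly {poly k}}) ^+ m)`_j)`_i = (j == 0)%:R * (m == i)%:R.
Proof.
rewrite -rmorphXn coefC; case: eqP => _; last by rewrite coef0 mul0r.
by rewrite coefXn mul1r eq_sym.
Qed.

Lemma coef_X_exp m i j : ((('X : {poly {poly k}}) ^+ m)`_j)`_i = (i == 0)%:R * (m == j)%:R.
Proof.
rewrite coefXn eq_sym; case: eqP => _; last by rewrite coef0 mulr0.
by rewrite coef1 mulr1.
Qed.

Lemma sum_coef_delta p (c : nat -> k) n :
  \sum_(m < size p) p`_m * (c m * (m == n :> nat)%:R) = p`_n * c n.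
Proof.
under eq_bigr => m _ do rewrite mulrA mulr_natr mulrb.
rewrite -big_mkcond (big_ord1_eq _ (fun m => p`_m * c m)).
by case: ltnP => // /(nth_default 0) ->; rewrite mul0r.
Qed.

Lemma additive_poly_evD p : ev2 ('Y + 'X) p = ev2 'Y p + ev2 'X p -> additive_poly p.
Proof.
move=> p_add.
have coef_eq i j : p`_(i + j) * 'C(i + j, j)%:R = p`_i * (j == 0)%:R + p`_j * (i == 0)%:R.
  have /= := congr1 (fun q : {poly {poly k}} => (q`_j)`_i) p_add; rewrite !coefD !coef_ev2.
  under eq_bigr => m _ do rewrite coef_XaY_exp.
  under [X in _ = X + _]eq_bigr => m _ do rewrite coef_Y_exp.
  under [X in _ = _ + X]eq_bigr => m _ do rewrite coef_X_exp.
  by rewrite (@sum_coef_delta p (fun m => 'C(m, j)%:R)) !(@sum_coef_delta p (fun=> _)).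
move=> n pn_neq0; apply/additive_exponentP; split.
  case: (posnP n) pn_neq0 => // -> p0_neq0.
  move: (coef_eq 0 0)%N; rewrite bin0 !mulr1 -{1}[p`_0]addr0 => /addrI /eqP.
  by rewrite eq_sym (negbTE p0_neq0).
move=> j /andP[j_gt0 jn]; move: (coef_eq (n - j) j)%N.
rewrite subnK ?(ltnW jn) // (gtn_eqF j_gt0) subn_eq0 leqNgt jn !mulr0 addr0.
by move/eqP; rewrite mulf_eq0 (negbTE pn_neq0) => /eqP.
Qed.

End AdditivePolynomial.

Section GaElements.
Variable al : option nat.

Lemma Ga_elt0 (A : comPzRingType) : Ga_elt al (fun _ => 0 : A).
Proof. by split; [exists 0%N | case: al]. Qed.

Lemma Ga_elt_map (A B : comPzRingType) (f : A -> B) (s : nat -> A) :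
  f 0 = 0 -> Ga_elt al s -> Ga_elt al (fun i => f (s i)).
Proof.
move=> f0 [[n s_bnd] s_al]; split; first by exists n => i /s_bnd ->.
by move=> i; move: (s_al i); case: al => // m s_m /s_m ->.
Qed.

Lemma Ga_eltD (A : comPzRingType) (s t : nat -> A) :
  Ga_elt al s -> Ga_elt al t -> Ga_elt al (fun i => s i + t i).
Proof.
move=> [[n s_bnd] s_al] [[m t_bnd] t_al]; split.
  by exists (maxn n m) => i; rewrite geq_max => /andP[/s_bnd -> /t_bnd ->]; rewrite addr0.
by move=> i; move: (s_al i) (t_al i); case: al => // a s_a t_a a_i; rewrite s_a ?t_a ?addr0.
Qed.

Lemma Ga_elt_sum (A : comPzRingType) N (F : nat -> nat -> A) :
  (forall l, (l < N)%N -> Ga_elt al (F l)) -> Ga_elt al (fun i => \sum_(l < N) F l i).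
Proof.
elim: N => [|N IHN] F_elt.
  rewrite (_ : (fun i => _) = fun _ => 0); first exact: Ga_elt0.
  by apply: functional_extensionality => i; rewrite big_ord0.
rewrite (_ : (fun i => _) = fun i => \sum_(l < N) F l i + F N i); last first.
  by apply: functional_extensionality => i; rewrite big_ord_recr.
by apply: Ga_eltD; [apply: IHN => l /ltnW; apply: F_elt | apply: F_elt].
Qed.

End GaElements.

Definition Ga_monomial (k : fieldType) (d : nat -> k) (m : nat) : nat -> poly_kAlg k :=
  fun i => d i *: 'X^m.

Lemma Ga_elt_monomial (k : fieldType) al (d : nat -> k) m :
  Ga_elt al d -> Ga_elt al (Ga_monomial d m).
Proof. by apply: (Ga_elt_map (f := fun c : k => c *: 'X^m : poly_kAlg k)); rewrite scale0r. Qed.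

Lemma Ga_elt_coef (k : fieldType) al m (a : nat -> poly_kAlg k) :
  Ga_elt al a -> Ga_elt al (fun j => (a j)`_m).
Proof. by apply: (Ga_elt_map (f := fun p : poly_kAlg k => p`_m)); exact: coef0. Qed.

Lemma Ga_elt_size_bound (k : fieldType) al (a : nat -> poly_kAlg k) :
  Ga_elt al a -> exists M, forall i, (size (a i) <= M)%N.
Proof.
move=> [[n a_bnd] _]; exists (\max_(i < n) size (a i))%N => i.
have [lt_i_n|/a_bnd ->] := ltnP i n; last by rewrite size_poly0.
exact: (leq_bigmax_cond (Ordinal lt_i_n)).
Qed.

Section GaSection.
Variables (k : fieldType) (al be : option nat).
Variable Psi : forall A : kAlg k, (nat -> A) -> nat -> A.
Hypothesis Psi_add : forall (A : kAlg k) (s t : nat -> A), Ga_elt al s -> Ga_elt al t ->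
  Psi (fun i => s i + t i) = fun i => Psi s i + Psi t i.
Hypothesis Psi_nat : forall (A B : kAlg k) (f : kHom A B) (s : nat -> A), Ga_elt al s ->
  Psi (fun i => f (s i)) = fun i => f (Psi s i).

Local Notation PX := (poly_kAlg k).
Local Notation E := (additive_exponent k).

Lemma Psi0 (A : kAlg k) : Psi (fun _ => 0 : A) = fun _ => 0.
Proof.
have := Psi_add (Ga_elt0 al A) (Ga_elt0 al A).
rewrite (_ : (fun _ => 0 + 0 : A) = fun _ => 0); last first.
  by apply: functional_extensionality => i; rewrite addr0.
move=> Psi00; apply: functional_extensionality => i.
by move: (congr1 (fun s => s i) Psi00) => /=; rewrite -{1}[Psi _ i]addr0 => /addrI <-.
Qed.

Lemma Psi_sum (A : kAlg k) N (F : nat -> nat -> A) :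
  (forall l, (l < N)%N -> Ga_elt al (F l)) ->
  Psi (fun i => \sum_(l < N) F l i) = fun i => \sum_(l < N) Psi (F l) i.
Proof.
elim: N => [|N IHN] F_elt.
  rewrite (_ : (fun i => _) = fun _ => 0) ?Psi0; last first.
    by apply: functional_extensionality => i; rewrite big_ord0.
  by apply: functional_extensionality => i; rewrite big_ord0.
have F_eltN l : (l < N)%N -> Ga_elt al (F l) by move/ltnW; apply: F_elt.
rewrite (_ : (fun i => _) = fun i => \sum_(l < N) F l i + F N i); last first.
  by apply: functional_extensionality => i; rewrite big_ord_recr.
rewrite Psi_add ?IHN //; last exact: F_elt.
  by apply: functional_extensionality => i; rewrite big_ord_recr.
exact: Ga_elt_sum.
Qed.

Lemma Psi_linear_additive (d : nat -> k) i :
  Ga_elt al d -> additive_poly (Psi (Ga_monomial d 1) i).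
Proof.
move=> d_elt; have X_elt := Ga_elt_monomial 1 d_elt.
have ev_elt (u : poly2_kAlg k) : Ga_elt al (fun j => ev_kHom u (Ga_monomial d 1 j)).
  by apply: Ga_elt_map; rewrite ?rmorph0.
pose Y : poly2_kAlg k := 'Y; pose X : poly2_kAlg k := 'X.
have Psi_XaY : Psi (fun j => ev_kHom (Y + X) (Ga_monomial d 1 j)) =
    Psi (fun j => ev_kHom Y (Ga_monomial d 1 j) + ev_kHom X (Ga_monomial d 1 j)).
  by congr (Psi _); apply: functional_extensionality => j; rewrite /= !evZ !evX mulrDr.
rewrite Psi_add // !Psi_nat // in Psi_XaY.
exact/additive_poly_evD/(congr1 (fun s => s i) Psi_XaY).
Qed.

Lemma Psi_monomial (d : nat -> k) m : Ga_elt al d ->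
  Psi (Ga_monomial d m) = fun i => Psi (Ga_monomial d 1) i \Po 'X^m.
Proof.
move=> d_elt.
have -> : Ga_monomial d m = fun i => ev_kHom ('X^m : PX) (Ga_monomial d 1 i).
  by apply: functional_extensionality => i; rewrite /= evZ expr1 evX mul_polyC.
rewrite Psi_nat; last exact: Ga_elt_monomial.
by apply: functional_extensionality => i; rewrite /= ev_poly.
Qed.

Lemma Psi_monomial_coef (d : nat -> k) m i r : Ga_elt al d ->
  (Psi (Ga_monomial d m) i)`_r != 0 -> E r = E m.
Proof.
move=> d_elt; rewrite Psi_monomial //.
have [->|m_gt0] := posnP m.
  by rewrite expr0 -polyC1 comp_polyCr coefC; case: (r =P 0%N) => [->|_]; rewrite ?eqxx.
rewrite coef_comp_poly_Xn //; case: ifP => [/dvdnP[e ->] | _]; last by rewrite eqxx.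
rewrite mulnK // => /(Psi_linear_additive d_elt) Ee; rewrite mulnC.
by apply/idP/idP => [/additive_exponent_divl|/additive_exponentM]; apply.
Qed.

Lemma Psi_monomial_expansion (a : nat -> PX) M :
  Ga_elt al a -> (forall i, (size (a i) <= M)%N) ->
  Psi a = fun i => \sum_(m < M) Psi (Ga_monomial (fun j => (a j)`_m) m) i.
Proof.
move=> a_elt le_a_M.
rewrite -(Psi_sum (F := fun m => Ga_monomial (fun j => (a j)`_m) m)) => [|m _]; last first.
  exact/Ga_elt_monomial/Ga_elt_coef.
congr Psi; apply: functional_extensionality => i.
rewrite -poly_def; apply/polyP => r; rewrite coef_poly.
by case: ltnP => // /(leq_trans (le_a_M i)) /(nth_default 0).
Qed.

Lemma Psi_additive_part (a : nat -> PX) : Ga_elt al a ->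
  Psi (fun i => additive_part (a i) : PX) = fun i => additive_part (Psi a i).
Proof.
move=> a_elt; have [M le_a_M] := Ga_elt_size_bound a_elt.
have ap_elt : Ga_elt al (fun i => additive_part (a i)).
  by apply: (Ga_elt_map (f := @additive_part k)) a_elt; exact: additive_part0.
have le_ap_M i : (size (additive_part (a i)) <= M)%N.
  exact: leq_trans (size_poly _ _) (le_a_M i).
rewrite (Psi_monomial_expansion a_elt le_a_M) (Psi_monomial_expansion ap_elt le_ap_M).
apply: functional_extensionality => i; apply/polyP => r.
rewrite coef_additive_part !coef_sum.
pose x m := (Psi (Ga_monomial (fun j => (a j)`_m) m) i)`_r.
have x_graded m : x m = if E r == E m then x m else 0.
  case: eqP => // neq_Er_Em; have [//|] := eqVneq (x m) 0.
  by move/Psi_monomial_coef => /(_ (Ga_elt_coef m a_elt)).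
have term m : (Psi (Ga_monomial (fun j => (additive_part (a j))`_m) m) i)`_r =
    if E m then x m else 0.
  rewrite (_ : Ga_monomial _ m = Ga_monomial (fun j => if E m then (a j)`_m else 0) m); last first.
    by apply: functional_extensionality => j; rewrite /Ga_monomial coef_additive_part.
  case: (E m) => //; rewrite (_ : Ga_monomial _ m = fun _ => 0) ?Psi0 ?coef0 //.
  by apply: functional_extensionality => j; rewrite /Ga_monomial scale0r.
under eq_bigr => m _ do rewrite term.
case: ifP => Er; last by rewrite big1 // => m _; rewrite x_graded Er; case: (E m).
by apply: eq_bigr => m _; rewrite -/(x m) x_graded Er; case: (E m).
Qed.

Hypothesis Psi_surj : forall (A : kAlg k) (v : nat -> A), Ga_elt be v ->
  exists s, Ga_elt al s /\ Psi s = v.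

Definition generic_point (l : nat) : nat -> PX := fun i => if i == l then 'X else 0.

Lemma Ga_elt_generic_point (B : kAlg k) (v : nat -> B) l :
  Ga_elt be v -> v l != 0 -> Ga_elt be (generic_point l).
Proof.
move=> [_ v_be] vl_neq0; split; first by exists l.+1 => i /gtn_eqF; rewrite /generic_point => ->.
move=> i; move: (v_be i) (v_be l); case: be => // b _ v_b /=.
rewrite /generic_point; case: eqP => // -> /v_b vl0.
by rewrite vl0 eqxx in vl_neq0.
Qed.

(* Vacuous when [l] is not a coordinate of G_a^be, where any choice will do. *)
Definition preimage_spec (l : nat) (s : nat -> PX) : Prop :=
  Ga_elt al s /\ (Ga_elt be (generic_point l) -> Psi s = generic_point l).

Definition generic_preimage (l : nat) : nat -> PX :=
  epsilon (inhabits (fun _ => 0)) (preimage_spec l).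

Lemma generic_preimage_spec l : preimage_spec l (generic_preimage l).
Proof.
apply: epsilon_spec.
have [/Psi_surj[s [s_elt Psi_s]] | not_elt] := classic (Ga_elt be (generic_point l)).
  by exists s.
by exists (fun _ => 0); split=> [|/not_elt //]; apply: Ga_elt0.
Qed.

Definition additive_preimage (l : nat) : nat -> PX :=
  fun i => additive_part (generic_preimage l i).

Lemma Ga_elt_additive_preimage l : Ga_elt al (additive_preimage l).
Proof.
apply: (Ga_elt_map (f := @additive_part k)); first exact: additive_part0.
exact: (generic_preimage_spec l).1.
Qed.

Lemma Psi_additive_preimage l :
  Ga_elt be (generic_point l) -> Psi (additive_preimage l) = generic_point l.
Proof.
have [pre_elt Psi_pre] := generic_preimage_spec l.
move=> /Psi_pre Psi_gen; rewrite /additive_preimage Psi_additive_part // Psi_gen.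
apply: functional_extensionality => i; rewrite /generic_point.
by case: (i == l); rewrite ?additive_partX ?additive_part0.
Qed.

Definition support_bound (B : kAlg k) (v : nat -> B) : nat :=
  epsilon (inhabits 0%N) (fun n => forall i, (n <= i)%N -> v i = 0).

Definition section_term (B : kAlg k) (v : nat -> B) (l : nat) : nat -> B :=
  fun i => ev (v l) (additive_preimage l i).

Definition Ga_section (B : kAlg k) (v : nat -> B) : nat -> B :=
  fun i => \sum_(l < support_bound v) section_term v l i.

Lemma Ga_elt_section_term (B : kAlg k) (v : nat -> B) l : Ga_elt al (section_term v l).
Proof.
by apply: (Ga_elt_map (f := ev (v l))); [exact: ev0 | exact: Ga_elt_additive_preimage].
Qed.

Lemma section_term0 (B : kAlg k) (v : nat -> B) l : v l = 0 -> section_term v l = fun _ => 0.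
Proof.
move=> vl0; apply: functional_extensionality => i.
by rewrite /section_term vl0 ev_additive_poly0 //; apply: additive_part_additive.
Qed.

Lemma Ga_sectionE (B : kAlg k) (v : nat -> B) M : (forall i, (M <= i)%N -> v i = 0) ->
  Ga_section v = fun i => \sum_(l < M) section_term v l i.
Proof.
move=> v_M; apply: functional_extensionality => i.
pose N := maxn (support_bound v) M.
have narrow M' : (forall j, (M' <= j)%N -> v j = 0) -> (M' <= N)%N ->
    \sum_(l < N) section_term v l i = \sum_(l < M') section_term v l i.
  move=> v_M' le_M'_N; rewrite (big_ord_widen N (section_term v ^~ i) le_M'_N).
  rewrite [RHS]big_mkcond /=; apply: eq_bigr => l _.
  by case: ltnP => // /v_M' /section_term0 ->.
have v_bound : forall j, (support_bound v <= j)%N -> v j = 0.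
  by apply: (epsilon_spec (inhabits 0%N) (fun n => forall j, (n <= j)%N -> v j = 0)); exists M.
by rewrite /Ga_section -(narrow _ v_bound) ?leq_maxl // (narrow _ v_M) ?leq_maxr.
Qed.

Lemma Ga_elt_section (B : kAlg k) (v : nat -> B) : Ga_elt be v -> Ga_elt al (Ga_section v).
Proof.
move=> [[n v_n] _]; rewrite (Ga_sectionE v_n).
by apply: Ga_elt_sum => l _; apply: Ga_elt_section_term.
Qed.

Lemma Ga_section_add (B : kAlg k) (v w : nat -> B) : Ga_elt be v -> Ga_elt be w ->
  Ga_section (fun i => v i + w i) = fun i => Ga_section v i + Ga_section w i.
Proof.
move=> [[n v_n] _] [[m w_m] _].
have v_nm i : (maxn n m <= i)%N -> v i = 0 by rewrite geq_max => /andP[/v_n].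
have w_nm i : (maxn n m <= i)%N -> w i = 0 by rewrite geq_max => /andP[_ /w_m].
have vw_nm i : (maxn n m <= i)%N -> v i + w i = 0 by move=> le; rewrite v_nm ?w_nm ?addr0.
rewrite (Ga_sectionE v_nm) (Ga_sectionE w_nm) (Ga_sectionE vw_nm).
apply: functional_extensionality => i; rewrite -big_split /=; apply: eq_bigr => l _.
exact/ev_additive_polyD/additive_part_additive.
Qed.

Lemma Ga_section_natural (A B : kAlg k) (f : kHom A B) (v : nat -> A) : Ga_elt be v ->
  Ga_section (fun i => f (v i)) = fun i => f (Ga_section v i).
Proof.
move=> [[n v_n] _].
have fv_n i : (n <= i)%N -> f (v i) = 0 by move/v_n ->; rewrite rmorph0.
rewrite (Ga_sectionE v_n) (Ga_sectionE fv_n); apply: functional_extensionality => i.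
by rewrite rmorph_sum; apply: eq_bigr => l _; rewrite /section_term ev_natural.
Qed.

Lemma Psi_section_term (B : kAlg k) (v : nat -> B) l : Ga_elt be v ->
  Psi (section_term v l) = fun i => if i == l then v l else 0.
Proof.
move=> v_elt; have [vl0|vl_neq0] := eqVneq (v l) 0.
  rewrite section_term0 // Psi0.
  by apply: functional_extensionality => i; rewrite vl0 if_same.
rewrite (Psi_nat (ev_kHom (v l)) (Ga_elt_additive_preimage l)).
rewrite Psi_additive_preimage; last exact: Ga_elt_generic_point v_elt vl_neq0.
apply: functional_extensionality => i; rewrite /generic_point.
by case: (i == l); rewrite /= ?evX ?ev0.
Qed.

Lemma Psi_Ga_section (B : kAlg k) (v : nat -> B) : Ga_elt be v -> Psi (Ga_section v) = v.
Proof.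
move=> v_elt; have [[n v_n] _] := v_elt.
rewrite (Ga_sectionE v_n) Psi_sum => [|l _]; last exact: Ga_elt_section_term.
apply: functional_extensionality => i.
under eq_bigr => l _ do rewrite Psi_section_term // eq_sym.
by rewrite -big_mkcond (big_ord1_eq _ v); case: ltnP => // /v_n ->.
Qed.

End GaSection.

Definition interleave (sel : nat -> bool) (idx : nat -> nat) (A : Type) (u v : nat -> A) :
  nat -> A := fun i => if sel i then u (idx i) else v (idx i).

Definition Ga_direct_sum (ga be de : option nat) (sel : nat -> bool) (idx : nat -> nat) :=
  forall A : comPzRingType,
  [/\ forall u v : nat -> A, Ga_elt ga u -> Ga_elt be v -> Ga_elt de (interleave sel idx u v),
      forall w : nat -> A, Ga_elt de w ->
        exists u v, [/\ Ga_elt ga u, Ga_elt be v & w = interleave sel idx u v] &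
      forall u v : nat -> A, Ga_elt ga u -> Ga_elt be v ->
        (forall i, interleave sel idx u v i = 0) -> (forall i, u i = 0) /\ (forall i, v i = 0)].

Lemma Ga_direct_sumC ga be de sel idx : Ga_direct_sum ga be de sel idx ->
  Ga_direct_sum be ga de (fun i => ~~ sel i) idx.
Proof.
move=> D A; have [D_elt D_surj D_inj] := D A.
have swap (u v : nat -> A) : interleave (fun i => ~~ sel i) idx u v = interleave sel idx v u.
  by apply: functional_extensionality => i; rewrite /interleave; case: (sel i).
split=> [u v u_elt v_elt | w /D_surj[u [v [u_elt v_elt ->]]] | u v u_elt v_elt].
- by rewrite swap; apply: D_elt.
- by exists v, u; rewrite swap.
- by rewrite swap => /(D_inj _ _ v_elt u_elt)[].
Qed.

Lemma Ga_direct_sum_fin g be :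
  Ga_direct_sum (Some g) be (if be is Some b then Some (g + b)%N else None)
    (fun i => (i < g)%N) (fun i => if (i < g)%N then i else (i - g)%N).
Proof.
move=> A; split.
- move=> u v [_ u_g] [[m v_m] v_be]; split.
    exists (g + m)%N => i le_gm_i; rewrite /interleave ltnNge (leq_trans (leq_addr m g) le_gm_i).
    by apply: v_m; rewrite leq_subRL // (leq_trans (leq_addr m g) le_gm_i).
  move=> i; move: (v_be (i - g)%N); case: be {v_be} => // b v_b le_gb_i.
  rewrite /interleave ltnNge (leq_trans (leq_addr b g) le_gb_i).
  by apply: v_b; rewrite leq_subRL // (leq_trans (leq_addr b g) le_gb_i).
- move=> w [[n w_n] w_de].
  exists (fun i => if (i < g)%N then w i else 0), (fun j => w (j + g)%N); split.
  + by split=> [|i /=]; [exists g => i; rewrite ltnNge => -> | rewrite ltnNge => ->].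
  + split; first by exists n => j le_n_j; apply/w_n/(leq_trans le_n_j (leq_addr _ _)).
    move=> j; move: (w_de (j + g)%N); case: be {w_de} => // b w_b le_b_j.
    by apply: w_b; rewrite addnC leq_add2r.
  + apply: functional_extensionality => i; rewrite /interleave.
    by case: ltnP => [-> // | le_g_i]; rewrite subnK.
- move=> u v [_ u_g] _ uv0; split=> [i | j].
    by have [lt_i_g|/u_g //] := ltnP i g; move: (uv0 i); rewrite /interleave lt_i_g.
  by move: (uv0 (j + g)%N); rewrite /interleave ltnNge leq_addl /= addnK.
Qed.

Lemma Ga_direct_sum_inf : Ga_direct_sum None None None (fun i => ~~ odd i) (fun i => i./2).
Proof.
move=> A; split.
- move=> u v [[n u_n] _] [[m v_m] _]; split=> //.
  exists (maxn n m).*2 => i le_i; rewrite /interleave.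
  have le_half : (maxn n m <= i./2)%N by rewrite -[maxn n m]doubleK half_leq.
  case: (odd i) => /=; [apply: v_m | apply: u_n];
    by apply: leq_trans le_half; rewrite ?leq_maxl ?leq_maxr.
- move=> w [[n w_n] _]; exists (fun j => w j.*2), (fun j => w j.*2.+1); split.
  + by split=> //; exists n => j le_n_j; apply: w_n; rewrite (leq_trans le_n_j) // -addnn leq_addl.
  + split=> //; exists n => j le_n_j; apply: w_n.
    by rewrite (leq_trans le_n_j) // -addnn leqW ?leq_addl.
  + apply: functional_extensionality => i; rewrite /interleave.
    by case: ifP => odd_i; congr w; rewrite -{1}(odd_double_half i); move: odd_i; case: (odd i).
- move=> u v _ _ uv0; split=> j.
    by move: (uv0 j.*2); rewrite /interleave odd_double /= doubleK.
  by move: (uv0 j.*2.+1); rewrite /interleave /= odd_double /= uphalf_double.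
Qed.

Lemma Ga_direct_sum_exists ga be : exists de sel idx, Ga_direct_sum ga be de sel idx.
Proof.
case: ga => [g|]; first by do 3 eexists; apply: Ga_direct_sum_fin.
case: be => [b|]; last by do 3 eexists; apply: Ga_direct_sum_inf.
by do 3 eexists; apply/Ga_direct_sumC/Ga_direct_sum_fin.
Qed.

Lemma kF_mapB (k : fieldType) (G : kFunctor k) (A B : kAlg k) (f : kHom A B) (x y : G A) :
  kF_map f (x - y) = kF_map f x - kF_map f y.
Proof. by apply/eqP; rewrite eq_sym subr_eq -kF_map_add subrK. Qed.

Lemma subfunctorD (k : fieldType) (G : kFunctor k) (T : forall A : kAlg k, G A -> Prop) :
  is_subfunctor T -> forall A (x y : G A), T A x -> T A y -> T A (x + y).
Proof.
move=> [T0 [TB _]] A x y Tx Ty.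
have TN z : T A z -> T A (- z) by move=> Tz; rewrite -sub0r; apply: TB.
by rewrite -[y]opprK; apply: TB => //; apply: TN.
Qed.

Definition Ga_coordinates (k : fieldType) (G : kFunctor k) (S T : forall A : kAlg k, G A -> Prop)
    (alpha : option nat) (phi : forall A : kAlg k, G A -> nat -> A) : Prop :=
  [/\ forall (A : kAlg k) x y i, T A x -> T A y -> phi A (x + y) i = phi A x i + phi A y i,
      forall (A : kAlg k) x, T A x -> Ga_elt alpha (phi A x),
      forall (A : kAlg k) (s : nat -> A), Ga_elt alpha s -> exists x, T A x /\ phi A x = s,
      forall (A : kAlg k) x, T A x -> ((forall i, phi A x i = 0) <-> S A x) &
      forall (A B : kAlg k) (f : kHom A B) x i, T A x -> phi B (kF_map f x) i = f (phi A x i)].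

Lemma Ga_coordinatesP (k : fieldType) (G : kFunctor k)
    (S T : forall A : kAlg k, G A -> Prop) alpha :
  subquot_iso_Ga S T alpha <-> exists phi, Ga_coordinates S T alpha phi.
Proof.
split=> -[phi]; first by move=> [? [? [? [? ?]]]]; exists phi; split.
by case=> ? ? ? ? ?; exists phi.
Qed.

Lemma Ga_coordinates_refl (k : fieldType) (G : kFunctor k)
    (S : forall A : kAlg k, G A -> Prop) :
  is_subfunctor S -> subquot_iso_Ga S S (Some 0%N).
Proof.
move=> [S0 _]; exists (fun A _ _ => 0); split; first by move=> *; rewrite addr0.
split; first by move=> A x _; split; [exists 0%N |].
split.
  move=> A s [_ s0]; exists 0; split=> //.
  by apply: functional_extensionality => i; rewrite s0.
by split=> [A x Sx | A B f x i _]; [split | rewrite rmorph0].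
Qed.

Unset Implicit Arguments.

Section Extension.
Variables (k : fieldType) (G : kFunctor k) (S U T : forall A : kAlg k, G A -> Prop).
Variables (ga be : option nat) (phi psi : forall A : kAlg k, G A -> nat -> A).
Hypothesis S_U : forall A x, S A x -> U A x.
Hypothesis U_T : forall A x, U A x -> T A x.
Hypothesis T_sub : is_subfunctor T.
Hypothesis phi_coord : Ga_coordinates S U ga phi.
Hypothesis psi_coord : Ga_coordinates U T be psi.
Variable rho : forall A : kAlg k, (nat -> A) -> G A.
Hypothesis rho_T : forall (A : kAlg k) (v : nat -> A), Ga_elt be v -> T A (rho A v).
Hypothesis rho_add : forall (A : kAlg k) (v w : nat -> A), Ga_elt be v -> Ga_elt be w ->
  rho A (fun i => v i + w i) = rho A v + rho A w.
Hypothesis rho_nat : forall (A B : kAlg k) (f : kHom A B) (v : nat -> A), Ga_elt be v ->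
  rho B (fun i => f (v i)) = kF_map f (rho A v).
Hypothesis psi_rho : forall (A : kAlg k) (v : nat -> A), Ga_elt be v -> psi A (rho A v) = v.
Set Implicit Arguments.

Lemma psiD (A : kAlg k) (x y : G A) : T A x -> T A y ->
  psi A (x + y) = fun i => psi A x i + psi A y i.
Proof.
by case: psi_coord => psi_add _ _ _ _ Tx Ty; apply: functional_extensionality => i; apply: psi_add.
Qed.

Lemma rho0 (A : kAlg k) : rho A (fun _ => 0) = 0.
Proof.
have := rho_add A _ _ (Ga_elt0 be A) (Ga_elt0 be A).
rewrite (_ : (fun _ => 0 + 0 : A) = fun _ => 0); last first.
  by apply: functional_extensionality => i; rewrite addr0.
by rewrite -{1}[rho A _]addr0 => /addrI <-.
Qed.

Definition proj_U (A : kAlg k) (x : G A) : G A := x - rho A (psi A x).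

Lemma T_proj_U (A : kAlg k) (x : G A) : T A x -> T A (proj_U x).
Proof.
case: T_sub psi_coord => _ [T_B _] [_ psi_elt _ _ _] Tx.
by apply: T_B => //; apply: rho_T; apply: psi_elt.
Qed.

Lemma U_proj_U (A : kAlg k) (x : G A) : T A x -> U A (proj_U x).
Proof.
case: psi_coord => _ psi_elt _ psi_ker _ Tx; have Tpx := T_proj_U Tx.
apply/(psi_ker _ _ Tpx) => i; have := psiD Tpx (rho_T _ _ (psi_elt _ _ Tx)).
rewrite /proj_U subrK psi_rho; last exact: psi_elt.
by move/(congr1 (fun s => s i)) => /=; rewrite -{1}[psi A x i]add0r => /addIr <-.
Qed.

Lemma proj_UD (A : kAlg k) (x y : G A) : T A x -> T A y -> proj_U (x + y) = proj_U x + proj_U y.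
Proof.
case: psi_coord => _ psi_elt _ _ _ Tx Ty.
rewrite /proj_U psiD // rho_add; [by rewrite opprD addrACA | exact: psi_elt ..].
Qed.

Lemma proj_U_natural (A B : kAlg k) (f : kHom A B) (x : G A) : T A x ->
  proj_U (kF_map f x) = kF_map f (proj_U x).
Proof.
case: psi_coord => _ psi_elt _ _ psi_nat Tx.
rewrite /proj_U kF_mapB -rho_nat; last exact: psi_elt.
by congr (_ - rho B _); apply: functional_extensionality => i; apply: psi_nat.
Qed.

Lemma psi_U (A : kAlg k) (x : G A) : U A x -> psi A x = fun _ => 0.
Proof.
case: psi_coord => _ _ _ psi_ker _ Ux.
by apply: functional_extensionality => i; apply: (psi_ker _ _ (U_T _ _ Ux)).2.
Qed.

Lemma Ga_coordinates_split_extension : exists de, subquot_iso_Ga S T de.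
Proof.
have [de [sel [idx D]]] := Ga_direct_sum_exists ga be; exists de.
case: phi_coord => phi_add phi_elt phi_surj phi_ker phi_nat.
case: psi_coord => psi_add psi_elt psi_surj psi_ker psi_nat.
exists (fun A x => interleave sel idx (phi A (proj_U x)) (psi A x)); split.
  move=> A x y i Tx Ty; rewrite /interleave proj_UD //.
  by case: (sel i); [apply: phi_add; apply: U_proj_U | apply: psi_add].
split.
  move=> A x Tx; case: (D A) => D_elt _ _.
  by apply: D_elt; [apply/phi_elt/U_proj_U | apply: psi_elt].
split.
  move=> A w; case: (D A) => _ D_surj _ /D_surj[u [v [u_elt v_elt ->]]].
  have [z [Uz <-]] := phi_surj A u u_elt.
  have Tz := U_T _ _ Uz; have Trv := rho_T _ _ v_elt.
  have psi_zv : psi A (z + rho A v) = v.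
    rewrite psiD // psi_rho // psi_U //.
    by apply: functional_extensionality => i; rewrite add0r.
  exists (z + rho A v); split; first exact: subfunctorD.
  by rewrite /proj_U psi_zv addrK.
split.
  move=> A x Tx; split=> [chi0 | Sx i].
    case: (D A) => _ _ /(_ _ _ (phi_elt _ _ (U_proj_U Tx)) (psi_elt _ _ Tx) chi0) [phi0 psi0].
    have Ux : U A x by apply/(psi_ker _ _ Tx).
    have proj_x : proj_U x = x by rewrite /proj_U psi_U // rho0 subr0.
    by apply/(phi_ker _ _ Ux); rewrite -proj_x.
  have Ux := S_U _ _ Sx; rewrite /interleave /proj_U psi_U // rho0 subr0.
  by case: (sel i) => //; apply: (phi_ker _ _ Ux).2.
move=> A B f x i Tx; rewrite /interleave proj_U_natural //.
by case: (sel i); [apply: phi_nat; apply: U_proj_U | apply: psi_nat].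
Qed.

End Extension.

Unset Implicit Arguments.

Section Filtration.
Variables (k : fieldType) (G : kFunctor k) (al : option nat).
Variable Pi : forall A : kAlg k, (nat -> A) -> G A.
Hypothesis Pi_add : forall (A : kAlg k) (s t : nat -> A), Ga_elt al s -> Ga_elt al t ->
  Pi A (fun i => s i + t i) = Pi A s + Pi A t.
Hypothesis Pi_nat : forall (A B : kAlg k) (f : kHom A B) (s : nat -> A), Ga_elt al s ->
  Pi B (fun i => f (s i)) = kF_map f (Pi A s).
Set Implicit Arguments.

Lemma Ga_coordinates_extension (S U T : forall A : kAlg k, G A -> Prop) ga be phi psi :
  (forall A x, S A x -> U A x) -> (forall A x, U A x -> T A x) -> is_subfunctor T ->
  Ga_coordinates S U ga phi -> Ga_coordinates U T be psi ->
  (forall A s, Ga_elt al s -> T A (Pi A s)) ->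
  (forall A x, T A x -> exists s, Ga_elt al s /\ U A (x - Pi A s)) ->
  exists de, subquot_iso_Ga S T de.
Proof.
move=> S_U U_T T_sub phi_coord psi_coord Pi_T T_Pi.
case: (psi_coord) => psi_add psi_elt psi_surj psi_ker psi_nat.
pose Psi (A : kAlg k) (s : nat -> A) := psi A (Pi A s).
have Psi_add (A : kAlg k) (s t : nat -> A) : Ga_elt al s -> Ga_elt al t ->
    Psi A (fun i => s i + t i) = fun i => Psi A s i + Psi A t i.
  move=> s_elt t_elt; apply: functional_extensionality => i.
  by rewrite /Psi Pi_add // psi_add //; apply: Pi_T.
have Psi_nat (A B : kAlg k) (f : kHom A B) (s : nat -> A) : Ga_elt al s ->
    Psi B (fun i => f (s i)) = fun i => f (Psi A s i).
  move=> s_elt; apply: functional_extensionality => i.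
  by rewrite /Psi Pi_nat // psi_nat //; apply: Pi_T.
have Psi_surj (A : kAlg k) (v : nat -> A) : Ga_elt be v -> exists s, Ga_elt al s /\ Psi A s = v.
  move=> /(psi_surj A)[x [Tx <-]]; have [s [s_elt U_xs]] := T_Pi A x Tx.
  exists s; split=> //; apply: functional_extensionality => i.
  have T_xs : T A (x - Pi A s) by case: T_sub => _ [T_B _]; apply: T_B => //; apply: Pi_T.
  have := psi_add A _ _ i T_xs (Pi_T A s s_elt).
  by rewrite subrK (psi_ker A _ T_xs).2 // add0r.
have sec_elt (A : kAlg k) (v : nat -> A) := @Ga_elt_section _ _ _ _ Psi_surj A v.
apply: (Ga_coordinates_split_extension S_U U_T T_sub phi_coord psi_coord
  (rho := fun A v => Pi A (Ga_section al be Psi v))).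
- by move=> A v /sec_elt; apply: Pi_T.
- move=> A v w v_elt w_elt.
  by rewrite (Ga_section_add al Psi) // Pi_add //; apply: sec_elt.
- move=> A B f v v_elt.
  by rewrite (Ga_section_natural al Psi) // Pi_nat //; apply: sec_elt.
- by move=> A v v_elt; apply: (Psi_Ga_section Psi_add Psi_nat Psi_surj).
Qed.

Lemma filtration_Ga_coordinates n (Fi : nat -> forall A : kAlg k, G A -> Prop) :
  (forall i, is_subfunctor (Fi i)) ->
  (forall i A x, (i < n)%N -> Fi i A x -> Fi i.+1 A x) ->
  (forall i, (i < n)%N -> exists a, subquot_iso_Ga (Fi i) (Fi i.+1) a) ->
  (forall A s, Ga_elt al s -> Fi n A (Pi A s)) ->
  (forall A x, Fi n A x -> exists s, Ga_elt al s /\ Fi 0%N A (x - Pi A s)) ->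
  exists be, subquot_iso_Ga (Fi 0%N) (Fi n) be.
Proof.
elim: n Fi => [|n IHn] Fi Fi_sub Fi_mono Fi_iso Pi_Fn Fn_Pi.
  by exists (Some 0%N); apply: Ga_coordinates_refl.
have F1_F A x j : (j <= n)%N -> Fi 1%N A x -> Fi j.+1 A x.
  by elim: j => // j IHj lt_j_n /(IHj (ltnW lt_j_n)); apply: Fi_mono.
have [be /Ga_coordinatesP[psi psi_coord]] : exists be, subquot_iso_Ga (Fi 1%N) (Fi n.+1) be.
  apply: (IHn (fun i => Fi i.+1)) => //.
  - by move=> i A x lt_i_n; apply: Fi_mono.
  - by move=> i lt_i_n; apply: Fi_iso.
  - by move=> A x /Fn_Pi[s [s_elt F0]]; exists s; split=> //; apply: Fi_mono.
have [ga /Ga_coordinatesP[phi phi_coord]] := Fi_iso 0%N isT.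
apply: (Ga_coordinates_extension _ _ (Fi_sub _) phi_coord psi_coord) => //.
- by move=> A x; apply: Fi_mono.
- by move=> A x; apply: F1_F.
- by move=> A x /Fn_Pi[s [s_elt F0]]; exists s; split=> //; apply: Fi_mono.
Qed.

End Filtration.

Lemma subquot_iso_Ga_equiv (k : fieldType) (G : kFunctor k)
    (S S' T T' : forall A : kAlg k, G A -> Prop) a :
  (forall A x, S A x <-> S' A x) -> (forall A x, T A x <-> T' A x) ->
  subquot_iso_Ga S T a -> subquot_iso_Ga S' T' a.
Proof.
move=> SS' TT' /Ga_coordinatesP[phi [phi_add phi_elt phi_surj phi_ker phi_nat]].
apply/Ga_coordinatesP; exists phi; split.
- by move=> A x y i /TT' Tx /TT' Ty; apply: phi_add.
- by move=> A x /TT'; apply: phi_elt.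
- by move=> A s /phi_surj[x [/TT' Tx <-]]; exists x.
- by move=> A x /TT' Tx; rewrite -SS'; apply: phi_ker.
- by move=> A B f x i /TT'; apply: phi_nat.
Qed.

Lemma strictly_additive_parametrization (k : fieldType) (F : kFunctor k) :
  strictly_additive F -> exists al (R : forall A : kAlg k, (nat -> A) -> F A),
  [/\ forall (A : kAlg k) (s t : nat -> A), Ga_elt al s -> Ga_elt al t ->
        R A (fun i => s i + t i) = R A s + R A t,
      forall (A B : kAlg k) (f : kHom A B) (s : nat -> A), Ga_elt al s ->
        R B (fun i => f (s i)) = kF_map f (R A s) &
      forall (A : kAlg k) (x : F A), exists s, Ga_elt al s /\ R A s = x].
Proof.
move=> [al /Ga_coordinatesP[phi [phi_add phi_elt phi_surj phi_ker phi_nat]]].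
have phi_inj (A : kAlg k) (x y : F A) : phi A x = phi A y -> x = y.
  move=> phi_xy; apply/eqP; rewrite -subr_eq0; apply/eqP/(phi_ker _ _ I) => i.
  have := phi_add A (x - y) y i I I; rewrite subrK phi_xy.
  by rewrite -{1}[phi A y i]add0r => /addIr <-.
pose R (A : kAlg k) (s : nat -> A) := epsilon (inhabits (0 : F A)) (fun x => phi A x = s).
have phi_R (A : kAlg k) (s : nat -> A) : Ga_elt al s -> phi A (R A s) = s.
  move=> /(phi_surj A)[x [_ phi_x]].
  by apply: (epsilon_spec (inhabits (0 : F A)) (fun x => phi A x = s)); exists x.
exists al, R; split.
- move=> A s t s_elt t_elt; apply: phi_inj; apply: functional_extensionality => i.
  by rewrite phi_add // !phi_R //; apply: Ga_eltD.
- move=> A B f s s_elt; apply: phi_inj; apply: functional_extensionality => i.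
  by rewrite phi_nat // !phi_R //; apply: Ga_elt_map; rewrite ?rmorph0.
- by move=> A x; exists (phi A x); split; [apply: phi_elt | apply/phi_inj/phi_R/phi_elt].
Qed.

End StrictlyAdditive.
Import StrictlyAdditive.

Theorem mainTheorem8 (k : fieldType) (F G : kFunctor k) (pi : kNat F G) :
  strictly_additive F -> additive G -> kEpi pi -> strictly_additive G.
Proof.
move=> /strictly_additive_parametrization[al [R [R_add R_nat R_surj]]].
move=> [n [Fi [Fi_sub [Fi0 [Fin [Fi_mono Fi_iso]]]]]] pi_epi.
pose Pi (A : kAlg k) (s : nat -> A) := pi A (R A s).
suff [be Fi_iso_Ga] : exists be, subquot_iso_Ga (Fi 0%N) (Fi n) be.
  by exists be; apply: subquot_iso_Ga_equiv Fi_iso_Ga => // A x; split.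
apply: (filtration_Ga_coordinates (al := al) (Pi := Pi) _ _ Fi_sub Fi_mono Fi_iso).
- by move=> A s t s_elt t_elt; rewrite /Pi R_add //; apply: kN_add.
- by move=> A B f s s_elt; rewrite /Pi R_nat //; apply: kN_natural.
- by move=> A s _; apply: Fin.
- move=> A x _; have [z <-] := pi_epi A x; have [s [s_elt <-]] := R_surj A z.
  by exists s; split=> //; apply/Fi0; rewrite GRing.subrr.
Qed.
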